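(* Let $\alpha\in(0,1)$, $T_+=\sqrt{1-\alpha}$, $\tau>0$, and let $N\ge 2$ and $1\le m_c<N$ be integers. Consider the $N$-dimensional Galerkin–Koornwinder (GK) system $$\frac{d\boldsymbol{y}}{dt}=A(\tau)\boldsymbol{y}+G_2(\boldsymbol{y})+G_3(\boldsymbol{y}),\qquad \boldsymbol{y}=(y_0,\dots,y_{N-1})^T\in\mathbb{R}^N,$$ with $A(\tau)$, $G_2$, $G_3$ as described in the context. Assume that $A(\tau)$ is diagonalizable over $\mathbb{C}$, and let $\boldsymbol{y}(t)$ be a solution of this system on an interval $[0,t_m]$. Let $\varphi_\tau\colon H_{\mathfrak{c}}\to H_{\mathfrak{s}}$ be a parameterization of $\boldsymbol{y}_{\mathfrak{s}}$ in terms of $\boldsymbol{y}_{\mathfrak{c}}$. Assume that for some $R>0$, $$\|\boldsymbol{y}(t)\|\le R,\qquad \|\boldsymbol{y}_{\mathfrak{c}}(t)+\varphi_\tau(\boldsymbol{y}_{\mathfrak{c}}(t))\|\le R,\qquad t\in[0,t_m].$$ Then there exists a constant $C(R)>0$ such that $$\overline{\Big\|\dot{\boldsymbol{z}}_{\mathfrak{c}}-\Lambda_{\mathfrak{c}}\boldsymbol{z}_{\mathfrak{c}}-Q_{\mathfrak{c}}^*\Big(G_2\big(P_{\mathfrak{c}}\boldsymbol{z}_{\mathfrak{c}}+\varphi_\tau(P_{\mathfrak{c}}\boldsymbol{z}_{\mathfrak{c}})\big)+G_3\big(P_{\mathfrak{c}}\boldsymbol{z}_{\mathfrak{c}}+\varphi_\tau(P_{\mathfrak{c}}\boldsymbol{z}_{\mathfrak{c}})\big)\Big)\Big\|^2}\;\le\;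 C(R)\,\overline{\big\|P_{\mathfrak{s}}\boldsymbol{z}_{\mathfrak{s}}-\varphi_\tau(P_{\mathfrak{c}}\boldsymbol{z}_{\mathfrak{c}})\big\|^2},$$ where $\overline{f}=\frac{1}{t_m}\int_0^{t_m}f(t)\,dt$ denotes the time average over $(0,t_m)$ and $\Lambda_{\mathfrak{c}}=\mathrm{diag}(\lambda_1,\dots,\lambda_{m_c})$.
   Context: Notation for the GK system. For $j\ge 0$ let $\kappa_j=\frac{(j^2+1)((j+1)^2+1)}{2j+1}$ (the squared norm of the $j$-th augmented Koornwinder polynomial) and $K_j(-1)=(j^2+j+1)(-1)^j$. For each $n\ge1$, the coefficients $\boldsymbol{a}_n=(a_{n,0},\dots,a_{n,n-1})^T$ are the solution of the upper triangular system $\mathbf{T}\boldsymbol{a}_n=\boldsymbol{b}_n$, where $\mathbf{T}=(\mathbf{T}_{i,j})_{0\le i,j\le n-1}$ has $\mathbf{T}_{i,j}=0$ if $j<i$, $\mathbf{T}_{i,i}=i^2+1$, $\mathbf{T}_{i,j}=-(2i+1)$ if $j>i$, and $b_{n,i}=-\tfrac12(2i+1)(n+i+1)(n-i)$ if $n+i$ is even, $b_{n,i}=(n^2+n)(2i+1)-\tfrac{i}{2}(n+i)(n-i+1)-\tfrac12(i+1)(n-i-1)(n+i+2)$ if $n+i$ is odd. The matrix $A(\tau)$ is the $N\times N$ real matrix with entries, for $0\le j,n\le N-1$, $$(A(\tau))_{j,n}=\frac{1}{\kappa_j}\Big(1-3T_+^2-\alpha K_n(-1)+\frac{2}{\tau}\sum_{k=0}^{n-1}a_{n,k}\big(\delta_{j,k}\kappa_j-1\big)\Big).$$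 The nonlinear terms are $G_2(\boldsymbol{y})=-3T_+\big(\sum_{n=0}^{N-1}y_n\big)^2\boldsymbol{\nu}_N$ and $G_3(\boldsymbol{y})=-\big(\sum_{n=0}^{N-1}y_n\big)^3\boldsymbol{\nu}_N$, with $\boldsymbol{\nu}_N=(1/\kappa_0,\dots,1/\kappa_{N-1})^T$; they are extended to $\mathbb{C}^N$ by the same formulas. (This system is the GK approximation of the delay equation $\dot{\hat T}=(1-3T_+^2)\hat T(t)-\alpha\hat T(t-\tau)-3T_+\hat T^2(t)-\hat T^3(t)$.) Spectral notation. The eigenvalues $\lambda_1,\dots,\lambda_N$ of $A(\tau)$ (repeated with multiplicity) are ordered by decreasing real part, and among equal real parts by decreasing imaginary part; $\boldsymbol{e}_1,\dots,\boldsymbol{e}_N$ are corresponding eigenvectors. $P=[\boldsymbol{e}_1,\dots,\boldsymbol{e}_N]$, $P_{\mathfrak{c}}=[\boldsymbol{e}_1,\dots,\boldsymbol{e}_{m_c}]$, $P_{\mathfrak{s}}=[\boldsymbol{e}_{m_c+1},\dots,\boldsymbol{e}_N]$; $Q$ is the $N\times N$ matrix whose columns are eigenvectors of the conjugate transpose $A(\tau)^*$, normalized so that $Q^*P=I_{N\times N}$, and $Q_{\mathfrak{c}}$ is the matrix of the first $m_c$ columns of $Q$. $H_{\mathfrak{c}}=\mathrm{span}\{\boldsymbol{e}_1,\dots,\boldsymbol{e}_{m_c}\}$, $H_{\mathfrak{s}}=\mathrm{span}\{\boldsymbol{e}_{m_c+1},\dots,\boldsymbol{e}_N\}$. For a solution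 $\boldsymbol{y}(t)$, $\boldsymbol{z}=(z_1,\dots,z_N)^T$ is defined by $\boldsymbol{y}=P\boldsymbol{z}$, $\boldsymbol{z}_{\mathfrak{c}}=(z_1,\dots,z_{m_c})^T$, $\boldsymbol{z}_{\mathfrak{s}}=(z_{m_c+1},\dots,z_N)^T$, $\boldsymbol{y}_{\mathfrak{c}}=P_{\mathfrak{c}}\boldsymbol{z}_{\mathfrak{c}}$ (low-mode projection) and $\boldsymbol{y}_{\mathfrak{s}}=P_{\mathfrak{s}}\boldsymbol{z}_{\mathfrak{s}}$ (high-mode projection). $\|\cdot\|$ is the Euclidean (Hermitian) norm. *)

From mathcomp Require Import all_boot all_order all_algebra.
From mathcomp Require Import all_classical all_reals all_analysis.
From mathcomp Require Import complex.
Set Implicit Arguments. Unset Strict Implicit. Unset Printing Implicit Defensive.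
Import numFieldNormedType.Exports.
Import Order.TTheory GRing.Theory Num.Theory.
Local Open Scope ring_scope.

Definition kappa (R : realType) (j : nat) : R :=
  ((j ^ 2 + 1)%:R * ((j.+1) ^ 2 + 1)%:R) / (2 * j + 1)%:R.

Definition Km1 (R : realType) (j : nat) : R := (j ^ 2 + j + 1)%:R * (-1) ^+ j.

Definition Tmat (R : realType) (n : nat) : 'M[R]_n :=
  \matrix_(i < n, j < n)
    if (j < i)%N then 0
    else if i == j then (i ^ 2 + 1)%:R else - (2 * i + 1)%:R.

Definition bvec (R : realType) (n : nat) : 'cV[R]_n :=
  \col_(i < n)
    if ~~ odd (n + i) then
      - (1 / 2) * (2 * i + 1)%:R * (n + i + 1)%:R * (n - i)%:R
    else
      (n ^ 2 + n)%:R * (2 * i + 1)%:R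
      - (i%:R / 2) * (n + i)%:R * (n - i + 1)%:R
      - (1 / 2) * (i + 1)%:R * (n - i - 1)%:R * (n + i + 2)%:R.

(* a_n, the (unique) solution of T a_n = b_n (T is triangular with nonzero diagonal) *)
Definition avec (R : realType) (n : nat) : 'cV[R]_n := invmx (Tmat R n) *m bvec R n.

Definition Tp (R : realType) (alpha : R) : R := Num.sqrt (1 - alpha).

Definition Amat (R : realType) (alpha tau : R) (N : nat) : 'M[R]_N :=
  \matrix_(j < N, n < N)
    ((kappa R j)^-1 *
     (1 - 3 * Tp alpha ^+ 2 - alpha * Km1 R n
      + 2 / tau * \sum_(k < n) avec R n k 0 * ((j == k :> nat)%:R * kappa R j - 1))).

Definition nuvec (R : realType) (N : nat) : 'cV[R]_N := \col_(j < N) (kappa R j)^-1.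

Definition G2 (R : realType) (alpha : R) (N : nat) (y : 'cV[R]_N) : 'cV[R]_N :=
  (- 3 * Tp alpha * (\sum_(n < N) y n 0) ^+ 2) *: nuvec R N.
Definition G3 (R : realType) (N : nat) (y : 'cV[R]_N) : 'cV[R]_N :=
  (- (\sum_(n < N) y n 0) ^+ 3) *: nuvec R N.

Definition toC (R : realType) (x : R) : R[i] := (x%:C)%C.
Definition MtoC (R : realType) (m n : nat) (M : 'M[R]_(m, n)) : 'M[R[i]]_(m, n) :=
  map_mx (@toC R) M.

Definition G2c (R : realType) (alpha : R) (N : nat) (y : 'cV[R[i]]_N) : 'cV[R[i]]_N :=
  (- 3 * toC (Tp alpha) * (\sum_(n < N) y n 0) ^+ 2) *: MtoC (nuvec R N).
Definition G3c (R : realType) (N : nat) (y : 'cV[R[i]]_N) : 'cV[R[i]]_N :=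
  (- (\sum_(n < N) y n 0) ^+ 3) *: MtoC (nuvec R N).

Definition adjoint (R : realType) (m n : nat) (M : 'M[R[i]]_(m, n)) : 'M[R[i]]_(n, m) :=
  (map_mx (@conjc R) M)^T.

Definition rnorm2 (R : realType) (n : nat) (v : 'cV[R]_n) : R :=
  \sum_(i < n) v i 0 ^+ 2.
Definition rnorm (R : realType) (n : nat) (v : 'cV[R]_n) : R := Num.sqrt (rnorm2 v).
Definition cnorm2 (R : realType) (n : nat) (v : 'cV[R[i]]_n) : R :=
  \sum_(i < n) (complex.Re (v i 0) ^+ 2 + complex.Im (v i 0) ^+ 2).
Definition cnorm (R : realType) (n : nat) (v : 'cV[R[i]]_n) : R := Num.sqrt (cnorm2 v).

Definition eig_ordered (R : realType) (N : nat) (lam : 'rV[R[i]]_N) : Prop :=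
  forall i j : 'I_N, (i < j)%N ->
    complex.Re (lam 0 j) < complex.Re (lam 0 i) \/
    (complex.Re (lam 0 j) = complex.Re (lam 0 i) /\
     complex.Im (lam 0 j) <= complex.Im (lam 0 i)).

Definition zvec (R : realType) (mc ns : nat) (P : 'M[R[i]]_(mc + ns))
  (y : 'cV[R]_(mc + ns)) : 'cV[R[i]]_(mc + ns) := invmx P *m MtoC y.
Definition zc (R : realType) (mc ns : nat) (P : 'M[R[i]]_(mc + ns))
  (y : 'cV[R]_(mc + ns)) : 'cV[R[i]]_mc := usubmx (zvec P y).
Definition zs (R : realType) (mc ns : nat) (P : 'M[R[i]]_(mc + ns))
  (y : 'cV[R]_(mc + ns)) : 'cV[R[i]]_ns := dsubmx (zvec P y).
Definition ycproj (R : realType) (mc ns : nat) (P : 'M[R[i]]_(mc + ns))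
  (y : 'cV[R]_(mc + ns)) : 'cV[R[i]]_(mc + ns) := lsubmx P *m zc P y.
Definition ysproj (R : realType) (mc ns : nat) (P : 'M[R[i]]_(mc + ns))
  (y : 'cV[R]_(mc + ns)) : 'cV[R[i]]_(mc + ns) := rsubmx P *m zs P y.

From mathcomp Require Import all_boot all_order all_algebra.
From mathcomp Require Import all_classical all_reals all_analysis.
From mathcomp Require Import complex.
From mathcomp Require Import ring lra.
Set Implicit Arguments. Unset Strict Implicit. Unset Printing Implicit Defensive.
Import numFieldNormedType.Exports.
Import Order.TTheory GRing.Theory Num.Theory.
Local Open Scope ring_scope.

(** Since [y] solves the full system and [P] diagonalises [A(tau)], the
  low-mode part of [P^-1 y'] is [Lambda_c z_c + Q_c^* (G2 + G3)(y)].  Both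
  nonlinearities depend on [y] only through [s(y) = sum_n y_n], as
  [g(s(y)) nu] with the cubic [g(s) = -3 T_+ s^2 - s^3]; hence the residual is
  [(g(s(y)) - g(s(w))) Q_c^* nu] with [w = y_c + phi(y_c)].  On the ball of
  radius [R] the cubic is Lipschitz, and [y - w = y_s - phi(y_c)] with
  [|s(v)|^2 <= N |v|^2] by Cauchy-Schwarz, so the residual is bounded pointwise
  in time by [C(R) |y_s - phi(y_c)|^2]; averaging over [(0, t_m)] concludes. *)

Section NonnegIntegral.
Import HBNNSimple.
Context d (T : measurableType d) (R : realType) (mu : {measure set T -> \bar R}).

(* No measurability is assumed: the integrands of the theorem involve the
   arbitrary map [phi]. *)
Lemma ge0_le_integralZl (D : set T) (f g : T -> \bar R) (c : R) : 0 < c ->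
  (forall x, D x -> (0 <= f x)%E) -> (forall x, D x -> (0 <= g x)%E) ->
  (forall x, D x -> (f x <= c%:E * g x)%E) ->
  (\int[mu]_(x in D) f x <= c%:E * \int[mu]_(x in D) g x)%E.
Proof.
move=> c0 f0 g0 fg; rewrite !ge0_integralE//.
apply: ge_ereal_sup => _ [h /= hf <-].
have ci0 : 0 <= c^-1 by rewrite invr_ge0 ltW.
pose h' := scale_nnsfun h ci0.
have -> : sintegral mu h = sintegral mu (cst c \* h')%R.
  by apply: eq_sintegral => x /=; rewrite mulrA mulfV ?gt_eqF// mul1r.
rewrite sintegralrM; apply: lee_wpmul2l; first by rewrite lee_fin ltW.
apply: ereal_sup_ubound => /=; exists h' => // x.
have := hf x; rewrite /patch /=; case: ifPn => xD hx.
  have := fg x; rewrite -inE => /(_ xD) fgx.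
  rewrite /= -(@lee_pmul2l _ c%:E) ?lte_fin// -EFinM mulrA mulfV ?gt_eqF// mul1r.
  exact: le_trans hx fgx.
have h0 : h x = 0 by apply/eqP; rewrite eq_le -lee_fin hx /=.
by rewrite h0 mulr0.
Qed.

End NonnegIntegral.

Lemma sqr_sum_le (R : realFieldType) n (x : 'I_n -> R) :
  (\sum_(i < n) x i) ^+ 2 <= n%:R * \sum_(i < n) x i ^+ 2.
Proof.
set S := \sum_(i < n) x i; set Q := \sum_(i < n) x i ^+ 2.
have spread : \sum_(i < n) (n%:R * x i - S) ^+ 2 = n%:R * (n%:R * Q - S ^+ 2).
  under eq_bigr do rewrite sqrrB exprMn -mulrA.
  rewrite big_split /= sumrB sumr_const card_ord sumrMnl -mulr_suml -!mulr_sumr.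
  by rewrite -/S -/Q -(mulr_natl (S ^+ 2) n); ring.
case: n => [|n] in x S Q spread *; first by rewrite /S big_ord0 expr0n mul0r.
rewrite -subr_ge0 -(pmulr_rge0 _ (ltr0Sn R n)) -spread.
by apply: sumr_ge0 => i _; exact: sqr_ge0.
Qed.

Lemma sqr_le_of_sqrt_le (R : rcfType) (x b : R) :
  0 <= x -> Num.sqrt x <= b -> x <= b ^+ 2.
Proof.
move=> x0 xb; have b0 := le_trans (sqrtr_ge0 x) xb.
by rewrite -(sqr_sqrtr x0) ler_sqr ?nnegrE ?sqrtr_ge0.
Qed.

Section ComplexSqNorm.
Variable R : rcfType.

Definition sqnormc (x : R[i]) : R := complex.Re x ^+ 2 + complex.Im x ^+ 2.

Lemma sqnormc_ge0 x : 0 <= sqnormc x.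
Proof. by rewrite addr_ge0 ?sqr_ge0. Qed.

Lemma sqnormcM x y : sqnormc (x * y) = sqnormc x * sqnormc y.
Proof. by case: x y => a b [c d]; rewrite /sqnormc /=; ring. Qed.

Lemma sqnormcD_le x y : sqnormc (x + y) <= 2 * sqnormc x + 2 * sqnormc y.
Proof.
case: x y => a b [c d]; rewrite /sqnormc /=.
by have := sqr_ge0 (a - c); have := sqr_ge0 (b - d); nra.
Qed.

Lemma sqnormcB_le x y : sqnormc (x - y) <= 2 * sqnormc x + 2 * sqnormc y.
Proof.
case: x y => a b [c d]; rewrite /sqnormc /=.
by have := sqr_ge0 (a + c); have := sqr_ge0 (b + d); nra.
Qed.

Lemma sqnormc_sum_le n (f : 'I_n -> R[i]) :
  sqnormc (\sum_(i < n) f i) <= n%:R * \sum_(i < n) sqnormc (f i).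
Proof.
rewrite /sqnormc !(raddf_sum (@complex.Re R : Rcomplex R -> R)).
rewrite !(raddf_sum (@complex.Im R : Rcomplex R -> R)) big_split mulrDr /=.
by apply: lerD; exact: sqr_sum_le.
Qed.

Definition cubic (k s : R[i]) : R[i] := k * s ^+ 2 - s ^+ 3.

Definition cubic_lip (k : R[i]) (B : R) : R := 8 * sqnormc k * B + 20 * B ^+ 2.

Lemma cubic_lip_ge0 k B : 0 <= B -> 0 <= cubic_lip k B.
Proof. by move=> B0; rewrite addr_ge0 ?mulr_ge0 ?sqnormc_ge0 ?sqr_ge0. Qed.

Lemma sqnormc_cubicB_le k a b B : sqnormc a <= B -> sqnormc b <= B ->
  sqnormc (cubic k a - cubic k b) <= cubic_lip k B * sqnormc (a - b).
Proof.
move=> aB bB; have B0 : 0 <= B := le_trans (sqnormc_ge0 a) aB.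
have -> : cubic k a - cubic k b = (a - b) * (k * (a + b) - (a ^+ 2 + a * b + b ^+ 2)).
  by rewrite /cubic; ring.
rewrite sqnormcM mulrC ler_wpM2r ?sqnormc_ge0 //.
have sqB x y : sqnormc x <= B -> sqnormc y <= B -> sqnormc (x * y) <= B * B.
  by move=> xB yB; rewrite sqnormcM ler_pM ?sqnormc_ge0.
have kab : sqnormc (k * (a + b)) <= sqnormc k * (4 * B).
  rewrite sqnormcM ler_wpM2l ?sqnormc_ge0 //.
  by have := sqnormcD_le a b; lra.
have := sqnormcB_le (k * (a + b)) (a ^+ 2 + a * b + b ^+ 2).
have := sqnormcD_le (a ^+ 2 + a * b) (b ^+ 2).
have := sqnormcD_le (a ^+ 2) (a * b).
have := sqB _ _ aB aB; have := sqB _ _ aB bB; have := sqB _ _ bB bB.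
rewrite /cubic_lip !expr2; lra.
Qed.

End ComplexSqNorm.

Definition entry_sum (V : nmodType) (N : nat) (v : 'cV[V]_N) : V :=
  \sum_(n < N) v n 0.

Lemma entry_sumB (V : zmodType) N (a b : 'cV[V]_N) :
  entry_sum (a - b) = entry_sum a - entry_sum b.
Proof. by rewrite /entry_sum -sumrB; apply: eq_bigr => n _; rewrite !mxE. Qed.

Section Complexification.
Variable R : realType.

Lemma MtoCM m n p (A : 'M[R]_(m, n)) (B : 'M[R]_(n, p)) :
  MtoC (A *m B) = MtoC A *m MtoC B.
Proof. exact: (map_mxM (real_complex R)). Qed.

Lemma MtoCD m n (A B : 'M[R]_(m, n)) : MtoC (A + B) = MtoC A + MtoC B.
Proof. exact: (map_mxD (real_complex R)). Qed.

Lemma entry_sum_MtoC N (y : 'cV[R]_N) : entry_sum (MtoC y) = toC (entry_sum y).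
Proof. by rewrite /toC rmorph_sum; apply: eq_bigr => n _; rewrite mxE. Qed.

Lemma G2c_add_G3c alpha N (v : 'cV[R[i]]_N) :
  G2c alpha v + G3c v = cubic (-3 * toC (Tp alpha)) (entry_sum v) *: MtoC (nuvec R N).
Proof. by rewrite /G2c /G3c -scalerDl /cubic mulrA. Qed.

Lemma MtoC_G2_add_G3 alpha N (y : 'cV[R]_N) :
  MtoC (G2 alpha y + G3 y) = G2c alpha (MtoC y) + G3c (MtoC y).
Proof.
rewrite G2c_add_G3c entry_sum_MtoC /G2 /G3 -scalerDl.
apply/matrixP => i j; rewrite !mxE /toC /cubic.
by rewrite -/(entry_sum y) !(rmorphM, rmorphB, rmorphN, rmorphXn, rmorph_nat).
Qed.

Lemma cnorm2_ge0 N (v : 'cV[R[i]]_N) : 0 <= cnorm2 v.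
Proof. by apply: sumr_ge0 => i _; exact: sqnormc_ge0. Qed.

Lemma cnorm2_MtoC N (y : 'cV[R]_N) : cnorm2 (MtoC y) = rnorm2 y.
Proof. by apply: eq_bigr => i _; rewrite mxE /toC /= expr0n addr0. Qed.

Lemma cnorm2Z N k (v : 'cV[R[i]]_N) : cnorm2 (k *: v) = sqnormc k * cnorm2 v.
Proof.
by rewrite /cnorm2 mulr_sumr; apply: eq_bigr => i _; rewrite mxE; exact: sqnormcM.
Qed.

Lemma sqnormc_entry_sum_le N (v : 'cV[R[i]]_N) :
  sqnormc (entry_sum v) <= N%:R * cnorm2 v.
Proof. exact: sqnormc_sum_le. Qed.

End Complexification.

Lemma adjoint_lsubmx (R : realType) m n p (M : 'M[R[i]]_(m, n + p)) :
  adjoint (lsubmx M) = usubmx (adjoint M).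
Proof. by apply/matrixP => i j; rewrite !mxE. Qed.

Lemma usubmx_diag_mul (K : pzSemiRingType) m n p (d : 'rV[K]_(m + n))
    (M : 'M[K]_(m + n, p)) :
  usubmx (diag_mx d *m M) = diag_mx (lsubmx d) *m usubmx M.
Proof. by apply/matrixP => i j; rewrite !mul_diag_mx !mxE. Qed.

Section ModalDecomposition.
Variables (R : realType) (mc ns : nat).
Local Notation N := (mc + ns)%N.
Variables (A : 'M[R]_N) (lam : 'rV[R[i]]_N) (P Q : 'M[R[i]]_N).
Hypothesis P_unit : P \in unitmx.

Lemma ycproj_add_ysproj y : ycproj P y + ysproj P y = MtoC y.
Proof.
rewrite /ycproj /ysproj /zc /zs -mul_row_col hsubmxK vsubmxK /zvec.
by rewrite mulmxA mulmxV // mul1mx.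
Qed.

Hypothesis AP : MtoC A *m P = P *m diag_mx lam.
Hypothesis QP : adjoint Q *m P = 1%:M.

Lemma adjoint_eq_invmx : adjoint Q = invmx P.
Proof. by rewrite -[adjoint Q]mulmx1 -(mulmxV P_unit) mulmxA QP mul1mx. Qed.

Lemma invmx_mul_eigen : invmx P *m MtoC A = diag_mx lam *m invmx P.
Proof.
rewrite -[LHS]mulmx1 -(mulmxV P_unit) !mulmxA -(mulmxA _ (MtoC A)) AP.
by rewrite mulmxA mulVmx // mul1mx.
Qed.

Lemma low_mode_residualE alpha y w :
  usubmx (invmx P *m MtoC (A *m y + G2 alpha y + G3 y))
    - diag_mx (lsubmx lam) *m zc P y - adjoint (lsubmx Q) *m (G2c alpha w + G3c w)
  = (cubic (-3 * toC (Tp alpha)) (entry_sum (MtoC y))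
     - cubic (-3 * toC (Tp alpha)) (entry_sum w))
    *: (usubmx (invmx P) *m MtoC (nuvec R N)).
Proof.
rewrite -[A *m y + _ + _]addrA MtoCD MtoC_G2_add_G3 MtoCM mulmxDr mulmxA invmx_mul_eigen.
rewrite raddfD /= -mulmxA usubmx_diag_mul adjoint_lsubmx adjoint_eq_invmx.
rewrite /zc /zvec [diag_mx _ *m _ + _]addrC addrK -!mul_usub_mx !G2c_add_G3c.
by rewrite -!scalemxAr -scalerBl.
Qed.

Lemma low_mode_residual_le alpha (Rb : R) y w : rnorm y <= Rb -> cnorm w <= Rb ->
  cnorm2 (usubmx (invmx P *m MtoC (A *m y + G2 alpha y + G3 y))
          - diag_mx (lsubmx lam) *m zc P y - adjoint (lsubmx Q) *m (G2c alpha w + G3c w))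
  <= N%:R * cubic_lip (-3 * toC (Tp alpha)) (N%:R * Rb ^+ 2)
       * cnorm2 (usubmx (invmx P) *m MtoC (nuvec R N)) * cnorm2 (MtoC y - w).
Proof.
move=> yRb wRb; rewrite low_mode_residualE cnorm2Z.
set k := -3 * toC (Tp alpha); set u := usubmx _ *m _.
have sum_le (v : 'cV[R[i]]_N) :
    Num.sqrt (cnorm2 v) <= Rb -> sqnormc (entry_sum v) <= N%:R * Rb ^+ 2.
  move=> vRb; apply: le_trans (sqnormc_entry_sum_le v) _.
  by rewrite ler_wpM2l // sqr_le_of_sqrt_le ?cnorm2_ge0.
have yB : sqnormc (entry_sum (MtoC y)) <= N%:R * Rb ^+ 2.
  by apply: sum_le; rewrite cnorm2_MtoC.
have wB : sqnormc (entry_sum w) <= N%:R * Rb ^+ 2 by exact: sum_le.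
have diff : sqnormc (entry_sum (MtoC y) - entry_sum w) <= N%:R * cnorm2 (MtoC y - w).
  by rewrite -entry_sumB sqnormc_entry_sum_le.
have lip0 : 0 <= cubic_lip k (N%:R * Rb ^+ 2).
  by rewrite cubic_lip_ge0 // mulr_ge0 ?sqr_ge0.
apply: le_trans (ler_wpM2r (cnorm2_ge0 u) (sqnormc_cubicB_le k yB wB)) _.
rewrite [X in _ <= X](_ : _ =
  cubic_lip k (N%:R * Rb ^+ 2) * (N%:R * cnorm2 (MtoC y - w)) * cnorm2 u).
  by rewrite ler_wpM2r ?cnorm2_ge0 // ler_wpM2l.
by ring.
Qed.

End ModalDecomposition.

Theorem proposition1 (R : realType) (alpha tau : R) (mc ns : nat)
    (lam : 'rV[R[i]]_(mc + ns)) (P Q : 'M[R[i]]_(mc + ns)) :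
  0 < alpha < 1 -> 0 < tau -> (1 <= mc)%N -> (1 <= ns)%N ->
  (* A(tau) diagonalizable over C, with eigenvector matrix P and ordered eigenvalues *)
  P \in unitmx ->
  MtoC (Amat alpha tau (mc + ns)) *m P = P *m diag_mx lam ->
  eig_ordered lam ->
  (* Q: eigenvectors of A(tau)^*, normalized by Q^* P = I *)
  adjoint (MtoC (Amat alpha tau (mc + ns))) *m Q = Q *m diag_mx (map_mx (@conjc R) lam) ->
  adjoint Q *m P = 1%:M ->
  forall Rb : R, 0 < Rb ->
  exists C : R, 0 < C /\
  forall (tm : R) (y : R -> 'cV[R]_(mc + ns))
         (phi : 'cV[R[i]]_(mc + ns) -> 'cV[R[i]]_(mc + ns)),
    0 < tm ->
    (* y is a solution of the GK system on [0, tm] *)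
    {within `[0, tm]%classic, continuous y}%classic ->
    (forall t, 0 < t < tm ->
       derivable y t 1 /\
       'D_1 y t = Amat alpha tau (mc + ns) *m y t + G2 alpha (y t) + G3 (y t)) ->
    (* phi : H_c -> H_s *)
    (forall v, (exists w, v = lsubmx P *m w) -> exists w, phi v = rsubmx P *m w) ->
    (forall t, 0 <= t <= tm ->
       rnorm (y t) <= Rb /\ cnorm (ycproj P (y t) + phi (ycproj P (y t))) <= Rb) ->
    let zcdot t := usubmx (invmx P *m MtoC ('D_1 y t)) in
    let wc t := ycproj P (y t) + phi (ycproj P (y t)) in
    ((tm^-1)%:E *
       \int[@lebesgue_measure R]_(t in `]0%R, tm[%classic)
         (cnorm2 (zcdot t - diag_mx (lsubmx lam) *m zc P (y t)
                  - adjoint (lsubmx Q) *m (G2c alpha (wc t) + G3c (wc t))))%:E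
     <= C%:E * ((tm^-1)%:E *
       \int[@lebesgue_measure R]_(t in `]0%R, tm[%classic)
         (cnorm2 (ysproj P (y t) - phi (ycproj P (y t))))%:E))%E.
Proof.
move=> _ _ _ _ P_unit AP _ _ QP Rb _.
pose C0 := (mc + ns)%:R * cubic_lip (-3 * toC (Tp alpha)) ((mc + ns)%:R * Rb ^+ 2)
  * cnorm2 (usubmx (invmx P) *m MtoC (nuvec R (mc + ns))).
have C0_ge0 : 0 <= C0.
  by rewrite /C0 mulr_ge0 ?cnorm2_ge0 // mulr_ge0 // cubic_lip_ge0 // mulr_ge0 // sqr_ge0.
exists (C0 + 1); split; first by rewrite ltr_pwDr.
move=> tm y phi tm0 _ ode _ bounds /=.
rewrite muleCA; apply: lee_wpmul2l; first by rewrite lee_fin invr_ge0 ltW.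
apply: ge0_le_integralZl => [|t _|t _|t]; rewrite ?lee_fin ?cnorm2_ge0 ?ltr_pwDr //.
rewrite /= in_itv /= => /andP[t0 t1].
have [yRb wRb] := bounds t (ltac:(by rewrite !ltW)).
rewrite (ode t (ltac:(by rewrite t0))).2.
apply: le_trans (low_mode_residual_le P_unit AP QP alpha yRb wRb) _.
have -> : ysproj P (y t) - phi (ycproj P (y t))
        = MtoC (y t) - (ycproj P (y t) + phi (ycproj P (y t))).
  by rewrite -(ycproj_add_ysproj P_unit (y t)) opprD addrACA subrr add0r.
by rewrite ler_wpM2r ?cnorm2_ge0 ?lerDl.
Qed.
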